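(* Let $A$ be an algebra of Engel type and let $I$ be a sandwich ideal of $A$. If $A/I$ is a Yagzhev algebra, then $A$ is a Yagzhev algebra.
   Context: An algebra here is a vector space $A$ over a field $\Bbbk$ of characteristic zero equipped with finitely many symmetric multilinear operations $\Psi_\ell:A^\ell\to A$, $2\le\ell\le m$. An ideal is a subspace $I$ such that $\Psi_\ell(a_1,\dots,a_\ell)\in I$ whenever some $a_i\in I$. A monomial is a formal expression built from variables by applying the operations $\Psi_\ell$; its degree is the number of occurrences of variables. $I$ is a sandwich ideal if for every $k\ge0$, every multilinear monomial $M(z_1,z_2,x_1,\dots,x_k)$ of degree $k+2$, every $z_1,z_2\in I$ and every $x_1,\dots,x_k\in A$, one has $M(z_1,z_2,x_1,\dots,x_k)=0$. Terms: $x$ is a term with $|x|=1$; if $t_1,\dots,t_\ell$ are terms then $\Psi_\ell(t_1,\dots,t_\ell)$ is a term with $|\cdot|=\sum|t_i|$ (distinct formal expressions are distinct terms). $A$ is a Yagzhev algebra if there is $q_0$ with $\sum_{|t|=q}t(a)=0$ for all $a\in A$ and all $q\ge q_0$. For $x\in A$ let $\mathrm{Ad}_{\ell-1}(x)$ be the linear map $y\mapsto\Psi_\ell(y,x,\dots,x)$, and let $E_s(x)=\sum \ell_1\cdots\ell_q\,\mathrm{Ad}_{\ell_1-1}(x)\circ\cdots\circ\mathrm{Ad}_{\ell_q-1}(x)$, summed over all $q\ge1$ and sequences with $2\le\ell_i\le m$ and $\sum(\ell_i-1)=s$ (the degree-$s$ component of $\sum_{k\ge0}(\sum_\ell\ell\,\mathrm{Ad}_{\ell-1}(x))^k$).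 $A$ is of Engel type if there is $s_0$ with $E_s(x)=0$ for all $x\in A$ and all $s\ge s_0$. *)

From HB Require Import structures.
From mathcomp Require Import all_boot all_order all_algebra.
Set Implicit Arguments. Unset Strict Implicit. Unset Printing Implicit Defensive.
Import GRing.Theory.
Local Open Scope ring_scope.

(* Formal expressions (monomials / terms): variables indexed by nat, and
   nodes [Op ts] standing for Psi_(size ts)(ts).  Ordered trees: distinct
   formal expressions are distinct terms. *)
Inductive term : Type := Var of nat | Op of seq term.

Section Algebra.
Variables (k : fieldType) (V : lmodType k) (m : nat) (Psi : nat -> seq V -> V).

Definition multilinear_ops : Prop :=
  forall l, (2 <= l <= m)%N -> forall (s : seq V), size s = l ->
  forall i, (i < l)%N -> forall (c : k) (x y : V),
    Psi l (set_nth 0 s i (c *: x + y)) =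
      c *: Psi l (set_nth 0 s i x) + Psi l (set_nth 0 s i y).

Definition symmetric_ops : Prop :=
  forall l, (2 <= l <= m)%N -> forall (s t : seq V), size s = l ->
    perm_eq s t -> Psi l s = Psi l t.

Definition is_algebra : Prop := multilinear_ops /\ symmetric_ops.

Definition subspace (I : pred V) : Prop :=
  0 \in I /\ forall (c : k) x y, x \in I -> y \in I -> c *: x + y \in I.

Definition is_ideal (I : pred V) : Prop :=
  subspace I /\
  forall l, (2 <= l <= m)%N -> forall s : seq V, size s = l ->
    has (fun a => a \in I) s -> Psi l s \in I.

Fixpoint wf_term (t : term) : bool :=
  match t with
  | Var _ => true
  | Op ts => (2 <= size ts <= m)%N && all wf_term ts
  end.

Fixpoint leaves (t : term) : seq nat :=
  match t with
  | Var i => [:: i]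
  | Op ts => flatten (map leaves ts)
  end.

Fixpoint eval (v : nat -> V) (t : term) : V :=
  match t with
  | Var i => v i
  | Op ts => Psi (size ts) (map (eval v) ts)
  end.

(* Sandwich ideal: every multilinear monomial M(z1,z2,x1..xk) of degree k+2
   (leaves = a permutation of the variables 0..k+1, with z1 = var 0,
   z2 = var 1) vanishes when z1, z2 are in I. *)
Definition sandwich_ideal (I : pred V) : Prop :=
  is_ideal I /\
  forall (n : nat) (M : term), wf_term M ->
    perm_eq (leaves M) (iota 0 n.+2) ->
    forall v : nat -> V, v 0%N \in I -> v 1%N \in I -> eval v M = 0.

(* Enumeration of all terms in the single variable x (= Var 0) of degree q. *)
Fixpoint tuples_of (f : nat -> seq term) (l q : nat) : seq (seq term) :=
  match l with
  | 0 => if q == 0%N then [:: [::]] else [::]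
  | l'.+1 => flatten [seq [seq t :: ts | t <- f j, ts <- tuples_of f l' (q - j)]
                     | j <- iota 1 q]
  end.

Fixpoint terms_fuel (n q : nat) : seq term :=
  match n with
  | 0 => [::]
  | n'.+1 => (if q == 1%N then [:: Var 0] else [::]) ++
      flatten [seq [seq Op ts | ts <- tuples_of (terms_fuel n') l q]
              | l <- iota 2 (m - 1)]
  end.

Definition terms_of_degree (q : nat) : seq term := terms_fuel q q.

Definition Yagzhev : Prop :=
  exists q0 : nat, forall q, (q0 <= q)%N -> forall a : V,
    \sum_(t <- terms_of_degree q) eval (fun _ => a) t = 0.

(* Ad_{l-1}(x) y = Psi_l(y, x, ..., x) *)
Definition Ad (l : nat) (x y : V) : V := Psi l (y :: nseq l.-1 x).

(* sequences (l_1 - 1, ..., l_q - 1), q >= 1, with 2 <= l_i <= m, summing to s *)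
Fixpoint comps_fuel (n s : nat) : seq (seq nat) :=
  match n with
  | 0 => [::]
  | n'.+1 => flatten [seq (if j == s then [:: [:: j]]
                            else [seq j :: c | c <- comps_fuel n' (s - j)])
                     | j <- iota 1 (m - 1) & (j <= s)%N]
  end.

Definition comps (s : nat) : seq (seq nat) := comps_fuel s s.

Definition E (s : nat) (x y : V) : V :=
  \sum_(c <- comps s)
     (\prod_(j <- c) j.+1)%:R *: foldr (fun j acc => Ad j.+1 x acc) y c.

Definition Engel_type : Prop :=
  exists s0 : nat, forall s, (s0 <= s)%N -> forall x y : V, E s x y = 0.

End Algebra.

(* pi : A -> B is a surjective algebra homomorphism with kernel I,
   i.e. B is (isomorphic to) the quotient algebra A/I. *)
Definition quotient_map (k : fieldType) (A B : lmodType k) (m : nat)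
  (PsiA : nat -> seq A -> A) (PsiB : nat -> seq B -> B)
  (I : pred A) (pi : A -> B) : Prop :=
  [/\ forall (c : k) x y, pi (c *: x + y) = c *: pi x + pi y,
      forall l, (2 <= l <= m)%N -> forall s : seq A, size s = l ->
        pi (PsiA l s) = PsiB l (map pi s),
      forall b : B, exists a : A, pi a = b
    & forall a : A, pi a = 0 <-> a \in I].

From HB Require Import structures.
From mathcomp Require Import all_boot all_order all_algebra.
From mathcomp Require Import zify.
Set Implicit Arguments. Unset Strict Implicit. Unset Printing Implicit Defensive.
Import GRing.Theory.
Local Open Scope ring_scope.

(* Fix [a] and let [T q] be the sum of all terms of degree [q] evaluated at
   [a], so that [X = sum_q T q x^q] satisfies [X = a x + sum_l Psi_l(X, ..., X)].
   Since [A/I] is Yagzhev, [T q \in I] for [q >= q0]; split [X = P + R] where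
   [P] is the polynomial part of degree [< q0].  Products with two factors in
   the sandwich ideal vanish, so [Psi_l(P + R, ...) = Psi_l(P, ...) +
   l Ad_(l-1)(P) R] and [R = C + sum_l l Ad_(l-1)(P) R], with [C] the tail of
   [sum_l Psi_l(P, ..., P)].  The Engel condition makes the Neumann series
   [sum_s E_s(P) C] finite; it solves the same recursion, which determines [R]
   degree by degree, so [T q] vanishes beyond a bound independent of [a].
   Power series with vector coefficients are handled through their values at
   scalars [x]: in characteristic 0 a polynomial is determined by its values. *)

Section FormalPolynomials.
Variables (k : fieldType) (V : lmodType k).
Implicit Types (s t : seq (nat * V)) (x : k).

Lemma vandermonde_eq0 (c : nat -> V) M : [pchar k] =i pred0 ->
  (forall i, (i < M)%N -> \sum_(e < M) (i%:R : k) ^+ e *: c e = 0) ->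
  forall e, (e < M)%N -> c e = 0.
Proof.
move=> char0 h e he.
pose Vm := Vandermonde M (\row_(j < M) (j : nat)%:R : 'rV[k]_M).
have Vm_unit : Vm \in unitmx.
  rewrite unitmxE unitfE det_Vandermonde.
  apply/prodf_neq0 => i _; apply/prodf_neq0 => j hij.
  by rewrite !mxE -natrB ?(ltnW hij) // ((pcharf0P _).1 char0) subn_eq0 -ltnNge.
pose e' := Ordinal he.
have -> : c e = \sum_(i < M) ((1%:M : 'M[k]_M) i e') *: c i.
  rewrite (bigD1 e') //= mxE eqxx scale1r big1 ?addr0 // => i hi.
  by rewrite mxE (negbTE hi) scale0r.
rewrite -(mulmxV Vm_unit).
under eq_bigr do rewrite mxE scaler_suml.
rewrite exchange_big /= big1 // => p _.
rewrite (eq_bigr (fun i : 'I_M => invmx Vm p e' *: ((p : nat)%:R ^+ (i : nat) *: c i))).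
  by rewrite -scaler_sumr h ?scaler0.
by move=> i _; rewrite !mxE scalerA mulrC.
Qed.

(* A formal polynomial with coefficients in V is a list of monomials
   (degree, coefficient); degrees may repeat. *)
Definition peval s x := \sum_(y <- s) x ^+ y.1 *: y.2.
Definition pcoef s d := \sum_(y <- s | y.1 == d) y.2.
Definition pscale c s := [seq (y.1, c *: y.2) | y <- s].
Definition ptrunc N (g : nat -> V) := [seq (i, g i) | i <- iota 0 N].

Lemma peval_pcoef s M x : (forall y, y \in s -> (y.1 < M)%N) ->
  peval s x = \sum_(d < M) x ^+ d *: pcoef s d.
Proof.
move=> hM; under [RHS]eq_bigr do rewrite scaler_sumr big_mkcond.
rewrite exchange_big /=; apply: eq_big_seq => y /hM hy.
rewrite (bigD1 (Ordinal hy)) //= eqxx big1 ?addr0 // => i hi.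
by case: eqP => // yi; move: hi; rewrite -val_eqE /= -yi eqxx.
Qed.

Lemma pcoef_eq s t : [pchar k] =i pred0 ->
  (forall x, peval s x = peval t x) -> forall d, pcoef s d = pcoef t d.
Proof.
move=> char0 h d; pose M := (\max_(y <- s ++ t) y.1).+1.
have hM y : y \in s ++ t -> (y.1 < M)%N by move=> hy; rewrite ltnS leq_bigmax_seq.
have hs y : y \in s -> (y.1 < M)%N by move=> hy; rewrite hM // mem_cat hy.
have ht y : y \in t -> (y.1 < M)%N by move=> hy; rewrite hM // mem_cat hy orbT.
case: (ltnP d M) => hd.
  apply/eqP; rewrite -subr_eq0; apply/eqP.
  apply: (vandermonde_eq0 (c := fun d => pcoef s d - pcoef t d) char0 _ hd) => i _.
  under eq_bigr do rewrite scalerBr.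
  by rewrite sumrB -(peval_pcoef _ hs) -(peval_pcoef _ ht) h subrr.
rewrite /pcoef !big1_seq // => y /andP [/eqP yd hy].
  by move: (ht _ hy); rewrite yd ltnNge hd.
by move: (hs _ hy); rewrite yd ltnNge hd.
Qed.

Lemma peval_cat s t x : peval (s ++ t) x = peval s x + peval t x.
Proof. by rewrite /peval big_cat. Qed.

Lemma peval_flatten (ss : seq (seq (nat * V))) x :
  peval (flatten ss) x = \sum_(s <- ss) peval s x.
Proof. by rewrite /peval big_flatten. Qed.

Lemma peval_scale c s x : peval (pscale c s) x = c *: peval s x.
Proof.
rewrite /peval big_map scaler_sumr; apply: eq_bigr => y _ /=.
by rewrite !scalerA mulrC.
Qed.

Lemma peval_trunc N g x : peval (ptrunc N g) x = \sum_(i <- iota 0 N) x ^+ i *: g i.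
Proof. by rewrite /peval big_map. Qed.

Lemma pcoef_cat s t d : pcoef (s ++ t) d = pcoef s d + pcoef t d.
Proof. by rewrite /pcoef big_cat. Qed.

Lemma pcoef_flatten (ss : seq (seq (nat * V))) d :
  pcoef (flatten ss) d = \sum_(s <- ss) pcoef s d.
Proof. by rewrite /pcoef big_flatten. Qed.

Lemma pcoef_scale c s d : pcoef (pscale c s) d = c *: pcoef s d.
Proof. by rewrite /pcoef big_map scaler_sumr. Qed.

Lemma pcoef_trunc N g d : pcoef (ptrunc N g) d = if (d < N)%N then g d else 0.
Proof.
rewrite /pcoef big_map /= -big_filter.
case: ltnP => hd.
  by rewrite (@filter_pred1_uniq _ _ d) ?iota_uniq ?mem_iota // big_seq1.
rewrite big1_seq // => i /andP [_]; rewrite mem_filter mem_iota => /andP [/eqP -> hi].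
by move: hi; rewrite add0n ltnNge hd.
Qed.

End FormalPolynomials.

Section DegreeBound.
Variables (k : fieldType) (V : lmodType k).

Definition deg_lt B (s : seq (nat * V)) := all (fun y => y.1 < B)%N s.

Lemma deg_lt_mono B B' s : (B <= B')%N -> deg_lt B s -> deg_lt B' s.
Proof. by move=> hB /allP hs; apply/allP => y /hs hy; apply: leq_trans hy hB. Qed.

Lemma deg_lt_flatten B (ss : seq (seq (nat * V))) :
  (forall s, s \in ss -> deg_lt B s) -> deg_lt B (flatten ss).
Proof. by move=> h; apply/allP => y /flattenP [s /h /allP]; apply. Qed.

Lemma deg_lt_scale B c s : deg_lt B (pscale c s) = deg_lt B s.
Proof. by rewrite /deg_lt all_map. Qed.

Lemma pcoef_deg_lt B s d : deg_lt B s -> (B <= d)%N -> pcoef s d = 0.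
Proof.
move=> /allP hs hd; rewrite /pcoef big1_seq // => y /andP [/eqP yd /hs].
by rewrite yd ltnNge hd.
Qed.

End DegreeBound.

Section Subspace.
Variables (k : fieldType) (V : lmodType k) (I : pred V).
Hypothesis I_subspace : subspace I.

Lemma subspaceZ c x : x \in I -> c *: x \in I.
Proof. by move=> hx; have := I_subspace.2 c x 0 hx I_subspace.1; rewrite addr0. Qed.

Lemma subspace_sum (J : Type) (r : seq J) (F : J -> V) :
  (forall j, F j \in I) -> \sum_(j <- r) F j \in I.
Proof.
move=> hF; elim: r => [|j r IH]; first by rewrite big_nil; exact: I_subspace.1.
by rewrite big_cons; have := I_subspace.2 1 _ _ (hF j) IH; rewrite scale1r.
Qed.

End Subspace.

Fixpoint tuples (K n : nat) : seq (seq nat) :=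
  if n is n'.+1 then [seq j :: c | j <- iota 0 K, c <- tuples K n'] else [:: [::]].

Fixpoint compositions (l q : nat) : seq (seq nat) :=
  if l is l'.+1 then
    flatten [seq [seq j :: c | c <- compositions l' (q - j)] | j <- iota 1 q]
  else if q == 0%N then [:: [::]] else [::].

Lemma size_tuples K n c : c \in tuples K n -> size c = n.
Proof.
elim: n c => [|n IH] c /=; first by rewrite inE => /eqP ->.
by case/allpairsPdep => [j [c' [_ hc' ->]]] /=; rewrite (IH _ hc').
Qed.

Lemma sumn_tuples K n c : c \in tuples K n -> (sumn c <= n * K)%N.
Proof.
elim: n c => [|n IH] c /=; first by rewrite inE => /eqP ->.
case/allpairsPdep => [j [c' [hj hc' ->]]] /=.
by move: hj; rewrite mem_iota => /andP [_ hj]; have := IH _ hc'; rewrite mulSn; lia.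
Qed.

Lemma compositionsP l q c : c \in compositions l q ->
  [/\ size c = l, all (fun j => 0 < j)%N c & sumn c = q].
Proof.
elim: l q c => [|l IH] q c /=; first by case: q => [|q] //=; rewrite inE => /eqP ->.
case/flattenP => x /mapP [j hj ->] /mapP [c' /IH [h1 h2 h3] ->] /=.
move: hj; rewrite mem_iota => /andP [hj1 hj2].
by rewrite h1 h2 h3 hj1 subnKC //; rewrite add1n ltnS in hj2.
Qed.

Lemma size_le_sumn (c : seq nat) : all (fun j => 0 < j)%N c -> (size c <= sumn c)%N.
Proof. by elim: c => //= j c IH /andP [hj /IH]; lia. Qed.

Lemma mem_ltn_sumn (c : seq nat) x : all (fun j => 0 < j)%N c -> (1 < size c)%N ->
  x \in c -> (x < sumn c)%N.
Proof.
move=> hpos hsize /perm_to_rem hp.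
move: hpos hsize; rewrite (perm_sumn hp) (perm_all _ hp) (perm_size hp).
by case: (rem x c) => [|z r] //= /and3P [_ hz _]; lia.
Qed.

(* For [d < N], the tuples of entries [< N] summing to [d] and avoiding [0]
   are exactly the compositions of [d]. *)
Lemma sum_tuples_compositions (V : nmodType) l N d (F : seq nat -> V) : (d < N)%N ->
  (forall c, size c = l -> 0%N \in c -> F c = 0) ->
  \sum_(c <- tuples N l | sumn c == d) F c = \sum_(c <- compositions l d) F c.
Proof.
elim: l d F => [|l IH] d F hd hF.
  by case: d hd => [|d] _; rewrite /= ?big_seq1 ?big_nil // big_mkcond big_seq1.
have zero_head : \sum_(c <- tuples N l | sumn (0%N :: c) == d) F (0%N :: c) = 0.
  rewrite big1_seq // => c /andP [_ /size_tuples hc].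
  by apply: hF; rewrite /= ?hc // inE eqxx.
have big_head j : (d < j)%N ->
    \sum_(c <- tuples N l | sumn (j :: c) == d) F (j :: c) = 0.
  by move=> hj; rewrite big_pred0 // => c /=; apply/negbTE; lia.
rewrite /= big_allpairs_dep big_flatten big_map.
under eq_bigr do rewrite big_map.
have -> : iota 0 N = 0%N :: iota 1 d ++ iota d.+1 (N - d.+1).
  by rewrite -cat_cons -[0%N :: iota 1 d]/(iota 0 d.+1) -iotaD subnKC.
rewrite big_cons big_cat /= zero_head add0r [X in _ + X]big1_seq ?addr0; last first.
  by move=> j /andP [_]; rewrite mem_iota => /andP [hj _]; apply: big_head.
apply: eq_big_seq => j; rewrite mem_iota => /andP [hj1 hj2].
rewrite -IH; last 2 first.
- exact: leq_ltn_trans (leq_subr _ _) hd.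
- by move=> c hc h0; apply: hF; rewrite /= ?hc // inE h0 orbT.
by apply: eq_bigl => c /=; apply/eqP/eqP; lia.
Qed.

Lemma set_nth_cat_size (T : Type) (x0 : T) pre post y x :
  set_nth x0 (pre ++ y :: post) (size pre) x = pre ++ x :: post.
Proof. by elim: pre => //= a pre ->. Qed.

Section MultilinearOps.
Variables (k : fieldType) (V : lmodType k) (m : nat) (Psi : nat -> seq V -> V).
Hypothesis Psi_lin : multilinear_ops m Psi.

Section Slot.
Variables (L : nat) (pre post : seq V).
Hypothesis hL : (2 <= L <= m)%N.
Hypothesis hsize : (size pre + (size post).+1)%N = L.

Lemma psi_slot_lin c x y : Psi L (pre ++ (c *: x + y) :: post) =
  c *: Psi L (pre ++ x :: post) + Psi L (pre ++ y :: post).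
Proof.
have hsz : size (pre ++ 0 :: post) = L by rewrite size_cat /= hsize.
have hi : (size pre < L)%N by rewrite -hsize -addSnnS leq_addr.
by have := Psi_lin hL hsz hi c x y; rewrite !set_nth_cat_size.
Qed.

Lemma psi_slot0 : Psi L (pre ++ 0 :: post) = 0.
Proof.
have := psi_slot_lin 1 0 0; rewrite !scale1r addr0 => h.
by apply: (addrI (Psi L (pre ++ 0 :: post))); rewrite addr0 -h.
Qed.

Lemma psi_slotD x y : Psi L (pre ++ (x + y) :: post) =
  Psi L (pre ++ x :: post) + Psi L (pre ++ y :: post).
Proof. by have := psi_slot_lin 1 x y; rewrite !scale1r. Qed.

Lemma psi_slotZ c x : Psi L (pre ++ (c *: x) :: post) = c *: Psi L (pre ++ x :: post).
Proof. by have := psi_slot_lin c x 0; rewrite !addr0 psi_slot0 addr0. Qed.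

Lemma psi_slot_sum (J : Type) (r : seq J) (F : J -> V) :
  Psi L (pre ++ (\sum_(j <- r) F j) :: post) = \sum_(j <- r) Psi L (pre ++ F j :: post).
Proof.
elim: r => [|j r IH]; first by rewrite !big_nil psi_slot0.
by rewrite !big_cons psi_slotD IH.
Qed.

End Slot.

Lemma psi_mem0 L s : (2 <= L <= m)%N -> size s = L -> 0 \in s -> Psi L s = 0.
Proof.
move=> hL hs /(nthP 0) [i hi hn].
have -> : s = take i s ++ 0 :: drop i.+1 s.
  by rewrite -[LHS](cat_take_drop i) (drop_nth 0 hi) hn.
apply: psi_slot0 => //.
by rewrite -hs size_take hi size_drop -addSnnS addnC subnK.
Qed.

Section Sandwich.
Hypothesis Psi_sym : symmetric_ops m Psi.
Variable I : pred V.
Hypothesis I_sandwich : sandwich_ideal m Psi I.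

Lemma psi_sandwich L s x y r : (2 <= L <= m)%N -> size s = L -> x \in I -> y \in I ->
  perm_eq s (x :: y :: r) -> Psi L s = 0.
Proof.
move=> hL hs hx hy hp.
rewrite (Psi_sym hL hs hp).
have ht : size (x :: y :: r) = L by rewrite -(perm_size hp).
set t := x :: y :: r in ht *.
have := I_sandwich.2 (L - 2)%N (Op (map Var (iota 0 L))) _ _ (nth 0 t) hx hy.
rewrite /= size_map size_iota -[X in Psi L X]map_comp.
have -> : map (eval Psi (nth 0 t) \o Var) (iota 0 L) = t.
  by rewrite -[RHS](mkseq_nth 0 t) ht.
apply; first by rewrite hL all_map; apply/allP.
rewrite -map_comp flatten_seq1.
have -> : [:: 0%N, 1%N & iota 2 (L - 2)] = iota 0 L.
  by case: L hL {hs ht} => [|[|L]] //= _; rewrite subn2.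
exact: perm_refl.
Qed.

(* Expanding [Psi_L(pre, u + v, ..., u + v)] multilinearly, the terms with two
   or more factors [v \in I] vanish; symmetry collects the others. *)
Lemma psi_nseqD_sandwich L u v n pre : v \in I ->
  (2 <= L <= m)%N -> (size pre + n)%N = L ->
  Psi L (pre ++ nseq n (u + v)) =
  Psi L (pre ++ nseq n u) + n%:R *: Psi L (v :: pre ++ nseq n.-1 u).
Proof.
move=> hv hL; elim: n pre => [|n IH] pre hs; first by rewrite scale0r addr0.
have hsu : (size (rcons pre u) + n)%N = L by rewrite size_rcons addSnnS.
have hsv : (size (rcons pre v) + n)%N = L by rewrite size_rcons addSnnS.
rewrite /= psi_slotD ?size_nseq //.
have := IH _ hsu; have := IH _ hsv; rewrite !cat_rcons => -> ->.
have -> : n%:R *: Psi L (v :: pre ++ v :: nseq n.-1 u) = 0.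
  case: n {IH hsu hsv} hs => [|n] hs; first by rewrite scale0r.
  rewrite (@psi_sandwich L _ v v (pre ++ nseq n u)) ?scaler0 //.
    by rewrite /= size_cat /= size_nseq -hs !addnS.
  by rewrite /= perm_cons -cat1s perm_catCA.
have -> : Psi L (pre ++ v :: nseq n u) = Psi L (v :: pre ++ nseq n u).
  apply: (Psi_sym hL); first by rewrite size_cat /= size_nseq.
  by rewrite -cat1s perm_catCA.
rewrite addr0; case: n {IH hsu hsv} hs => [|n] hs.
  by rewrite /= scale0r addr0 scale1r.
by rewrite /= -addrA -[(n.+2)%:R]natr1 scalerDl scale1r [_ + Psi L _]addrC.
Qed.

End Sandwich.

Lemma psi_nseq_peval L K (g : nat -> V) x n pre : (2 <= L <= m)%N -> (size pre + n)%N = L ->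
  Psi L (pre ++ nseq n (peval (ptrunc K g) x)) =
  peval [seq (sumn c, Psi L (pre ++ map g c)) | c <- tuples K n] x.
Proof.
move=> hL; elim: n pre => [|n IH] pre hs.
  by rewrite /peval /= big_seq1 /= expr0 scale1r.
rewrite /= {1}peval_trunc psi_slot_sum ?size_nseq //.
rewrite [RHS]/peval big_map big_allpairs_dep /=; apply: eq_bigr => q _.
rewrite psi_slotZ ?size_nseq //.
have := IH (rcons pre (g q)); rewrite cat_rcons => ->; last by rewrite size_rcons addSnnS.
rewrite /peval big_map scaler_sumr; apply: eq_bigr => c _ /=.
by rewrite scalerA exprD cat_rcons.
Qed.

Lemma arity_iota l : l \in iota 2 (m - 1) -> (2 <= l <= m)%N.
Proof. by rewrite mem_iota => /andP [h1 h2]; apply/andP; split => //; lia. Qed.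

Lemma arity_iota_pred j : j \in iota 1 (m - 1) -> (2 <= j.+1 <= m)%N.
Proof. by rewrite mem_iota => /andP [h1 h2]; apply/andP; split; lia. Qed.

Lemma sum_tuples_of (f : nat -> seq term) (ev : term -> V) l q pre :
  (2 <= size pre + l <= m)%N ->
  \sum_(ts <- tuples_of f l q) Psi (size pre + size ts) (pre ++ map ev ts) =
  \sum_(c <- compositions l q)
     Psi (size pre + l) (pre ++ map (fun j => \sum_(t <- f j) ev t) c).
Proof.
elim: l q pre => [|l IH] q pre hL.
  by case: q => [|q] /=; rewrite ?big_seq1 ?big_nil.
rewrite /= !big_flatten /= !big_map; apply: eq_bigr => j _.
rewrite big_allpairs_dep big_map /=.
have hL' : (1 < (size pre).+1 + l <= m)%N by rewrite addSnnS.
have step t : \sum_(ts <- tuples_of f l (q - j))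
      Psi (size pre + (size ts).+1) (pre ++ ev t :: map ev ts) =
    \sum_(c <- compositions l (q - j))
      Psi (size pre + l.+1) (pre ++ ev t :: map (fun j => \sum_(t <- f j) ev t) c).
  have := IH (q - j)%N (rcons pre (ev t)); rewrite size_rcons => /(_ hL') h.
  under eq_bigr do rewrite -addSnnS -cat_rcons.
  by rewrite h; apply: eq_bigr => c _; rewrite cat_rcons addSnnS.
under eq_bigr do rewrite step.
rewrite exchange_big /=; apply: eq_big_seq => c /compositionsP [hc _ _].
by symmetry; apply: psi_slot_sum; rewrite // size_map hc.
Qed.

Section TermSums.
Variable a : V.

Definition term_sum_fuel n q := \sum_(t <- terms_fuel m n q) eval Psi (fun _ => a) t.
Definition term_sum q := term_sum_fuel q q.

Lemma term_sum_fuelS n q : term_sum_fuel n.+1 q = (if q == 1%N then a else 0) +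
  \sum_(l <- iota 2 (m - 1)) \sum_(c <- compositions l q) Psi l (map (term_sum_fuel n) c).
Proof.
rewrite /term_sum_fuel /= big_cat; congr (_ + _).
  by case: (q == 1%N); rewrite ?big_seq1 ?big_nil.
rewrite big_flatten /= big_map; apply: eq_big_seq => l /arity_iota hl.
by rewrite big_map (@sum_tuples_of _ _ l q [::] hl).
Qed.

Lemma term_sum_fuel_succ n j : (j <= n)%N -> term_sum_fuel n j = term_sum_fuel n.+1 j.
Proof.
elim: n j => [|n IH] j hj.
  move: hj; rewrite leqn0 => /eqP ->.
  rewrite term_sum_fuelS /= add0r /term_sum_fuel /= big_nil.
  rewrite big1_seq // => l /andP [_ /arity_iota hl].
  by case: l hl => [|l] //= _; rewrite big_nil.
rewrite term_sum_fuelS [RHS]term_sum_fuelS; congr (_ + _).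
apply: eq_big_seq => l /arity_iota hl.
apply: eq_big_seq => c /compositionsP [h1 h2 h3].
congr (Psi l _); apply/eq_in_map => x hx; apply: IH.
have := mem_ltn_sumn h2 _ hx; rewrite h1 h3 => /(_ (proj1 (andP hl))) hx'.
by rewrite -ltnS; apply: leq_trans hx' hj.
Qed.

Lemma term_sum_fuel_eq n j : (j <= n)%N -> term_sum_fuel n j = term_sum j.
Proof.
elim: n => [|n IH] hj; first by move: hj; rewrite leqn0 => /eqP ->.
case: (ltngtP j n.+1) hj => // [hlt _| -> _] //.
by rewrite -term_sum_fuel_succ // IH.
Qed.

Lemma term_sum0 : term_sum 0 = 0.
Proof. by rewrite /term_sum /term_sum_fuel big_nil. Qed.

Lemma term_sumE q : (0 < q)%N -> term_sum q = (if q == 1%N then a else 0) +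
  \sum_(l <- iota 2 (m - 1)) \sum_(c <- compositions l q) Psi l (map term_sum c).
Proof.
case: q => [|q] // _; rewrite /term_sum term_sum_fuelS; congr (_ + _).
apply: eq_big_seq => l /arity_iota hl.
apply: eq_big_seq => c /compositionsP [h1 h2 h3].
congr (Psi l _); apply/eq_in_map => x hx; apply: term_sum_fuel_eq.
by have := mem_ltn_sumn h2 _ hx; rewrite h1 h3 ltnS => ->; case/andP: hl.
Qed.

End TermSums.

Lemma comps_fuel_succ n t : (t <= n)%N -> comps_fuel m n t = comps_fuel m n.+1 t.
Proof.
elim: n t => [|n IH] t ht.
  move: ht; rewrite leqn0 => /eqP -> /=.
  rewrite (@eq_in_filter _ _ pred0) ?filter_pred0 // => j.
  by rewrite mem_iota => /andP [h _]; case: j h.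
rewrite [LHS]/= [RHS]/=; congr flatten; apply/eq_in_map => j.
rewrite mem_filter mem_iota => /andP [hjt /andP [hj1 _]].
by case: eqP => // hne; rewrite IH //; lia.
Qed.

Lemma comps_fuel_eq n t : (t <= n)%N -> comps_fuel m n t = comps m t.
Proof.
elim: n => [|n IH] ht; first by move: ht; rewrite leqn0 => /eqP ->.
case: (ltngtP t n.+1) ht => // [hlt _| -> _] //.
by rewrite -comps_fuel_succ // IH.
Qed.

Lemma compsE s : (0 < s)%N -> comps m s =
  flatten [seq (if j == s then [:: [:: j]] else [seq j :: c | c <- comps m (s - j)])
          | j <- iota 1 (m - 1) & (j <= s)%N].
Proof.
case: s => [|s] // _; rewrite /comps [LHS]/=; congr flatten; apply/eq_in_map => j.
rewrite mem_filter mem_iota => /andP [hjt /andP [hj1 _]].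
by case: eqP => // hne; rewrite comps_fuel_eq //; lia.
Qed.

Lemma comps_fuel_parts n s c : c \in comps_fuel m n s -> all (fun j => 0 < j < m)%N c.
Proof.
elim: n s c => [|n IH] s c //=.
case/flattenP => y /mapP [j]; rewrite mem_filter mem_iota.
move=> /andP [_ /andP [hj1 hj2]] ->.
have hj : (0 < j < m)%N by apply/andP; split => //; lia.
case: eqP => _; first by rewrite inE => /eqP -> /=; rewrite hj.
by case/mapP => c' /IH hc' -> /=; rewrite hj.
Qed.

Lemma sumn_comps_fuel n s c : c \in comps_fuel m n s -> sumn c = s.
Proof.
elim: n s c => [|n IH] s c //=.
case/flattenP => y /mapP [j]; rewrite mem_filter mem_iota => /andP [hjs _] ->.
case: eqP => [-> |_]; first by rewrite inE => /eqP -> /=; rewrite addn0.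
by case/mapP => c' /IH hc' -> /=; rewrite hc' subnKC.
Qed.

Section Engel.
Variable x : V.

Lemma size_Ad_slot l : (2 <= l <= m)%N ->
  (size ([::] : seq V) + (size (nseq l.-1 x)).+1)%N = l.
Proof. by rewrite size_nseq; case: l => [|[|l]]. Qed.

Lemma Ad_sum l (J : Type) (r : seq J) (F : J -> V) : (2 <= l <= m)%N ->
  Ad Psi l x (\sum_(j <- r) F j) = \sum_(j <- r) Ad Psi l x (F j).
Proof. by move=> hl; apply: (@psi_slot_sum l [::] _ hl (size_Ad_slot hl)). Qed.

Lemma AdZ l c y : (2 <= l <= m)%N -> Ad Psi l x (c *: y) = c *: Ad Psi l x y.
Proof. by move=> hl; apply: (@psi_slotZ l [::] _ hl (size_Ad_slot hl)). Qed.

Lemma AdD l y z : (2 <= l <= m)%N -> Ad Psi l x (y + z) = Ad Psi l x y + Ad Psi l x z.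
Proof. by move=> hl; apply: (@psi_slotD l [::] _ hl (size_Ad_slot hl)). Qed.

Lemma Ad0 l : (2 <= l <= m)%N -> Ad Psi l x 0 = 0.
Proof. by move=> hl; apply: (@psi_slot0 l [::] _ hl (size_Ad_slot hl)). Qed.

(* Unlike [E], whose geometric series starts at [k = 1] (so [E 0 = 0]),
   [Eser] includes the identity summand [k = 0]. *)
Definition Eser s y := if s == 0%N then y else E m Psi s x y.

Lemma E_rec s y : (0 < s)%N -> E m Psi s x y =
  \sum_(j <- iota 1 (m - 1) | (j <= s)%N) (j.+1)%:R *: Ad Psi j.+1 x (Eser (s - j)%N y).
Proof.
move=> hs; rewrite /E compsE // big_flatten big_map big_filter.
rewrite big_seq_cond [RHS]big_seq_cond; apply: eq_bigr => j /andP [/arity_iota_pred hj hjs].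
case: eqP => [->|hne]; first by rewrite big_seq1 /= big_seq1 /Eser subnn eqxx.
have hlt : (j < s)%N by rewrite ltn_neqAle hjs andbT; apply/eqP.
rewrite big_map /Eser ifF; last by rewrite subn_eq0 leqNgt hlt.
rewrite /E Ad_sum // scaler_sumr; apply: eq_bigr => c _.
by rewrite big_cons /= natrM -scalerA AdZ.
Qed.

Lemma sum_Eser_rec S y : \sum_(s < S.+1) Eser s y = y +
  \sum_(j <- iota 1 (m - 1)) (j.+1)%:R *: Ad Psi j.+1 x (\sum_(s < (S.+1 - j)%N) Eser s y).
Proof.
elim: S => [|S IH].
  rewrite big_ord1 /Eser /= big1_seq ?addr0 // => j /andP [_ hj].
  have -> : (1 - j = 0)%N by move: hj; rewrite mem_iota; lia.
  by rewrite big_ord0 Ad0 ?scaler0 // arity_iota_pred.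
rewrite big_ord_recr /= IH -addrA; congr (_ + _).
rewrite [Eser S.+1 y]/Eser /= E_rec // (big_mkcond (fun j => j <= S.+1)%N) -big_split /=.
apply: eq_big_seq => j /arity_iota_pred hj.
case: leqP => hjS.
  have -> : (S.+2 - j = (S.+1 - j).+1)%N by lia.
  by rewrite big_ord_recr /= AdD // scalerDr.
have -> : (S.+2 - j = 0)%N by lia.
have -> : (S.+1 - j = 0)%N by lia.
by rewrite addr0.
Qed.

Variable s0 : nat.
Hypothesis E_vanish : forall s, (s0 <= s)%N -> forall x y, E m Psi s x y = 0.

Definition neumann y := \sum_(s < s0.+1) Eser s y.

Lemma sum_Eser_neumann n y : (s0.+1 <= n)%N -> \sum_(s < n) Eser s y = neumann y.
Proof.
elim: n => [|n IH] // hn.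
move: hn; rewrite leq_eqVlt => /orP [/eqP e | hlt]; first by rewrite /neumann e.
rewrite big_ord_recr /= IH // /Eser ifF; last by case: n hlt {IH}.
by rewrite E_vanish ?addr0 //; rewrite ltnS in hlt; apply: ltnW.
Qed.

(* Engel type makes [sum_k (sum_l l Ad_(l-1) x)^k] a finite sum, which
   therefore inverts [1 - sum_l l Ad_(l-1) x]. *)
Lemma neumann_fix y :
  neumann y = y + \sum_(j <- iota 1 (m - 1)) (j.+1)%:R *: Ad Psi j.+1 x (neumann y).
Proof.
rewrite -{1}(@sum_Eser_neumann (s0 + m).+1) ?ltnS ?leq_addr // sum_Eser_rec.
congr (_ + _); apply: eq_big_seq => j; rewrite mem_iota => /andP [h1 h2].
by rewrite sum_Eser_neumann //; lia.
Qed.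

End Engel.

Section Reduction.
Hypothesis Psi_sym : symmetric_ops m Psi.
Variable I : pred V.
Hypothesis I_sandwich : sandwich_ideal m Psi I.
Hypothesis char0 : [pchar k] =i pred0.
Variables (a : V) (q0 : nat).
Hypothesis q0_gt1 : (1 < q0)%N.
Hypothesis term_sum_ideal : forall q, (q0 <= q)%N -> term_sum a q \in I.

Definition low q := if (q < q0)%N then term_sum a q else 0.
Definition high q := if (q < q0)%N then 0 else term_sum a q.
Definition low_eval x := peval (ptrunc q0 low) x.

Definition Ad_low l (s : seq (nat * V)) :=
  [seq (y.1 + sumn c, Psi l (y.2 :: map low c)) | y <- s, c <- tuples q0 l.-1].
Definition Ad_coef l (g : nat -> V) d :=
  \sum_(c <- tuples q0 l.-1 | (sumn c <= d)%N) Psi l (g (d - sumn c)%N :: map low c).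

(* [psi_low] is the formal [sum_l Psi_l(P, ..., P)] for [P = low_eval]. *)
Definition psi_low := flatten [seq [seq (sumn c, Psi l (map low c)) | c <- tuples q0 l]
                              | l <- iota 2 (m - 1)].
Definition psi_low_tail := [seq y <- psi_low | (q0 <= y.1)%N].

Definition rec_rhs (g : nat -> V) d :=
  pcoef psi_low_tail d + \sum_(l <- iota 2 (m - 1)) l%:R *: Ad_coef l g d.

Lemma low0 : low 0 = 0.
Proof. by rewrite /low; case: ifP => // _; exact: term_sum0. Qed.

Lemma high_ideal q : high q \in I.
Proof.
by rewrite /high; case: ltnP => hq; [exact: I_sandwich.1.1.1 | exact: term_sum_ideal].
Qed.

Lemma term_sum_split q : term_sum a q = low q + high q.
Proof. by rewrite /low /high; case: ifP; rewrite ?add0r ?addr0. Qed.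

Lemma psi_low_mem0 l c y : (2 <= l <= m)%N -> size c = l.-1 -> 0%N \in c ->
  Psi l (y :: map low c) = 0.
Proof.
move=> hl hc h0; apply: psi_mem0 => //; first by rewrite /= size_map hc; case/andP: hl; case: l {hc}.
by rewrite inE -low0 map_f ?orbT.
Qed.

Lemma Ad_low_peval l s x : (2 <= l <= m)%N ->
  Ad Psi l (low_eval x) (peval s x) = peval (Ad_low l s) x.
Proof.
move=> hl; have hslot := size_Ad_slot (low_eval x) hl.
rewrite /Ad {1}/peval (@psi_slot_sum l [::] _ hl hslot).
rewrite /peval /Ad_low big_allpairs_dep /=; apply: eq_bigr => y _.
rewrite (@psi_slotZ l [::] _ hl hslot) /= /low_eval.
rewrite (@psi_nseq_peval l q0 low x l.-1 [:: y.2] hl); last first.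
  by rewrite /= add1n; case/andP: hl; case: l {hslot}.
by rewrite /peval big_map scaler_sumr; apply: eq_bigr => c _ /=; rewrite scalerA exprD.
Qed.

Lemma pcoef_Ad_low l s d : (2 <= l <= m)%N -> pcoef (Ad_low l s) d = Ad_coef l (pcoef s) d.
Proof.
move=> hl; rewrite /pcoef /Ad_low /Ad_coef big_mkcond big_allpairs_dep /= exchange_big.
rewrite [RHS]big_mkcond; apply: eq_big_seq => c /size_tuples hc.
have hslot : (size ([::] : seq V) + (size (map low c)).+1)%N = l.
  by rewrite size_map hc; case/andP: hl; case: l {hc}.
case: leqP => hcd.
  rewrite /pcoef [in RHS]big_mkcond (@psi_slot_sum l [::] _ hl hslot); apply: eq_bigr => y _ /=.
  have -> : (y.1 + sumn c == d) = (y.1 == d - sumn c)%N by apply/eqP/eqP; lia.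
  by case: ifP => // _; rewrite (@psi_slot0 l [::] _ hl hslot).
by apply: big1 => y _; case: eqP => // yd; lia.
Qed.

Lemma Ad_coef_ext l g h d : (forall e, (e <= d)%N -> g e = h e) ->
  Ad_coef l g d = Ad_coef l h d.
Proof. by move=> gh; apply: eq_bigr => c _; rewrite gh // leq_subr. Qed.

Lemma pcoef_psi_low_tail d :
  pcoef psi_low_tail d = if (q0 <= d)%N then pcoef psi_low d else 0.
Proof.
rewrite /pcoef big_filter_cond; case: ifP => hd.
  by apply: eq_bigl => y; case: eqP => [->|]; rewrite ?hd ?andbF.
by rewrite big_pred0 // => y; case: eqP => [->|]; rewrite ?hd ?andbF.
Qed.

Lemma peval_term_trunc d x : (q0 <= d.+1)%N ->
  peval (ptrunc d.+1 (term_sum a)) x = low_eval x + peval (ptrunc d.+1 high) x.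
Proof.
move=> hd; rewrite /low_eval !peval_trunc.
under eq_bigr do rewrite term_sum_split scalerDr.
rewrite big_split; congr (_ + _).
rewrite -(subnKC hd) iotaD big_cat /= [X in _ + X]big1_seq ?addr0 // => q /andP [_].
by rewrite mem_iota /low => /andP [hq _]; rewrite ltnNge hq scaler0.
Qed.

Lemma psi_term_trunc d l x : (q0 <= d.+1)%N -> (2 <= l <= m)%N ->
  Psi l (nseq l (peval (ptrunc d.+1 (term_sum a)) x)) =
  Psi l (nseq l (low_eval x)) + l%:R *: Ad Psi l (low_eval x) (peval (ptrunc d.+1 high) x).
Proof.
move=> hd hl; rewrite peval_term_trunc //.
have high_in : peval (ptrunc d.+1 high) x \in I.
  rewrite peval_trunc; apply: (subspace_sum I_sandwich.1.1) => q.
  exact/(subspaceZ I_sandwich.1.1)/high_ideal.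
exact: (@psi_nseqD_sandwich Psi_sym I I_sandwich l _ _ l [::] high_in hl).
Qed.

(* The recursion [term_sumE] of the degree-[d] terms, rewritten through
   [T = low + high] and the sandwich property. *)
Lemma high_rec_tail d : (q0 <= d)%N -> high d = rec_rhs high d.
Proof.
move=> hd; have hd1 : (1 < d)%N := leq_trans q0_gt1 hd.
pose lhs := flatten [seq [seq (sumn c, Psi l (map (term_sum a) c)) | c <- tuples d.+1 l]
                    | l <- iota 2 (m - 1)].
pose rhs := psi_low ++
  flatten [seq pscale l%:R (Ad_low l (ptrunc d.+1 high)) | l <- iota 2 (m - 1)].
have same_eval x : peval lhs x = peval rhs x.
  rewrite /lhs /rhs /psi_low peval_cat !peval_flatten !big_map -big_split /=.
  apply: eq_big_seq => l /arity_iota hl.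
  rewrite -(@psi_nseq_peval l d.+1 _ x l [::]) // psi_term_trunc ?(leqW hd) //.
  by rewrite /low_eval -(@psi_nseq_peval l q0 _ x l [::]) // peval_scale Ad_low_peval.
have high_lhs : high d = pcoef lhs d.
  rewrite /high ltnNge hd /= term_sumE ?(ltnW hd1) // gtn_eqF // add0r.
  rewrite pcoef_flatten big_map; apply: eq_big_seq => l /arity_iota hl.
  rewrite /pcoef big_map sum_tuples_compositions // => c hc h0.
  by apply: psi_mem0; rewrite ?size_map // -(term_sum0 a) map_f.
rewrite high_lhs (pcoef_eq char0 same_eval d) pcoef_cat /rec_rhs pcoef_psi_low_tail hd.
congr (_ + _); rewrite pcoef_flatten big_map; apply: eq_big_seq => l /arity_iota hl.
rewrite pcoef_scale pcoef_Ad_low //; congr (_ *: _); apply: Ad_coef_ext => e he.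
by rewrite pcoef_trunc ltnS he.
Qed.

Lemma high_rec_head d : (d < q0)%N -> high d = rec_rhs high d.
Proof.
move=> hd; rewrite /rec_rhs pcoef_psi_low_tail /high hd leqNgt hd /= add0r.
rewrite big1_seq // => l /andP [_ /arity_iota hl].
rewrite /Ad_coef big1_seq ?scaler0 // => c /andP [_ /size_tuples hc].
have -> : (d - sumn c < q0)%N by apply: leq_ltn_trans (leq_subr _ _) hd.
apply: psi_mem0 => //; last by rewrite inE eqxx.
by rewrite /= size_map hc; case/andP: hl; case: l {hc}.
Qed.

Lemma high_rec d : high d = rec_rhs high d.
Proof. by case: (ltnP d q0) => hd; [apply: high_rec_head | apply: high_rec_tail]. Qed.

(* A tuple [c] with [sumn c = 0] contributes a factor [low 0 = 0], so
   [Ad_coef l g d] only depends on [g] below [d]. *)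
Lemma Ad_coef_ext_lt l g h d : (2 <= l <= m)%N -> (forall e, (e < d)%N -> g e = h e) ->
  Ad_coef l g d = Ad_coef l h d.
Proof.
move=> hl gh; rewrite /Ad_coef big_seq_cond [RHS]big_seq_cond.
apply: eq_bigr => c /andP [/size_tuples hc hcd].
case: (posnP (sumn c)) => hs; last by rewrite gh //; lia.
have h0 : 0%N \in c.
  have : (0 < size c)%N by rewrite hc; case/andP: hl; case: l {hc}.
  case: c {hc hcd} hs => [|j c] //= hs _.
  by rewrite inE; apply/orP; left; apply/eqP; lia.
by rewrite !psi_low_mem0.
Qed.

Lemma rec_rhs_unique g h :
  (forall d, g d = rec_rhs g d) -> (forall d, h d = rec_rhs h d) -> g =1 h.
Proof.
move=> hg hh; elim/ltn_ind => d IH; rewrite [LHS]hg [RHS]hh /rec_rhs.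
congr (_ + _); apply: eq_big_seq => l /arity_iota hl.
by rewrite (Ad_coef_ext_lt hl IH).
Qed.

Variable s0 : nat.
Hypothesis E_vanish : forall s, (s0 <= s)%N -> forall x y, E m Psi s x y = 0.

Definition Ad_low_iter (c : seq nat) t := foldr (fun j t => Ad_low j.+1 t) t c.
Definition E_low s t :=
  flatten [seq pscale (\prod_(j <- c) j.+1)%:R (Ad_low_iter c t) | c <- comps m s].
Definition Eser_low s t := if s == 0%N then t else E_low s t.
Definition neumann_low t := flatten [seq Eser_low s t | s <- iota 0 s0.+1].
Definition neumann_coef := pcoef (neumann_low psi_low_tail).

Lemma Ad_low_iter_peval c t x : all (fun j => 0 < j < m)%N c ->
  foldr (fun j y => Ad Psi j.+1 (low_eval x) y) (peval t x) c =
  peval (Ad_low_iter c t) x.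
Proof.
elim: c => //= j c IH /andP [/andP [hj1 hj2] hc].
by rewrite IH // Ad_low_peval // ltnS hj1.
Qed.

Lemma neumann_low_peval t x : neumann (low_eval x) s0 (peval t x) = peval (neumann_low t) x.
Proof.
rewrite /neumann -(big_mkord xpredT (fun s => Eser _ s _)) /index_iota subn0.
rewrite peval_flatten big_map; apply: eq_bigr => s _; rewrite /Eser /Eser_low.
case: ifP => // _; rewrite /E peval_flatten big_map.
apply: eq_big_seq => c /comps_fuel_parts hc.
by rewrite peval_scale Ad_low_iter_peval.
Qed.

Lemma neumann_coef_rec d : neumann_coef d = rec_rhs neumann_coef d.
Proof.
have same_eval x : peval (neumann_low psi_low_tail) x =
    peval (psi_low_tail ++ flatten [seq pscale (j.+1)%:R
      (Ad_low j.+1 (neumann_low psi_low_tail)) | j <- iota 1 (m - 1)]) x.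
  rewrite -neumann_low_peval (@neumann_fix (low_eval x) s0 E_vanish) neumann_low_peval peval_cat.
  congr (_ + _); rewrite [RHS]peval_flatten big_map; apply: eq_big_seq => j /arity_iota_pred hj.
  by rewrite peval_scale Ad_low_peval.
rewrite /neumann_coef (pcoef_eq char0 same_eval d) pcoef_cat pcoef_flatten big_map.
rewrite /rec_rhs; congr (_ + _).
rewrite -[2%N]/(1 + 1)%N iotaDl big_map; apply: eq_big_seq => j /arity_iota_pred hj.
by rewrite pcoef_scale pcoef_Ad_low // add1n.
Qed.

Lemma deg_lt_Ad_low B l s : (l <= m)%N -> deg_lt B s -> deg_lt (B + m * q0) (Ad_low l s).
Proof.
move=> hl /allP hs; apply/all_allpairsP => y c /hs hy /sumn_tuples hc /=.
have : (l.-1 * q0 <= m * q0)%N by rewrite leq_mul2r (leq_trans (leq_pred _) hl) orbT.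
lia.
Qed.

Lemma deg_lt_Ad_low_iter B c t : all (fun j => 0 < j < m)%N c -> deg_lt B t ->
  deg_lt (B + size c * (m * q0)) (Ad_low_iter c t).
Proof.
elim: c => [|j c IH] /=; first by rewrite addn0.
move=> /andP [/andP [_ hj] hc] ht.
by rewrite mulSn addnCA [X in deg_lt X _]addnC; apply: deg_lt_Ad_low (IH hc ht).
Qed.

Lemma deg_lt_E_low B s t : deg_lt B t -> deg_lt (B + s * (m * q0)) (E_low s t).
Proof.
move=> ht; apply: deg_lt_flatten => u /mapP [c hc ->]; rewrite deg_lt_scale.
have hparts := comps_fuel_parts hc.
apply: deg_lt_mono (deg_lt_Ad_low_iter hparts ht).
rewrite leq_add2l leq_mul2r -[X in (_ <= X)%N](sumn_comps_fuel hc) size_le_sumn ?orbT //.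
by apply: sub_all hparts => j /andP [].
Qed.

Lemma deg_lt_neumann_low B t : deg_lt B t -> deg_lt (B + s0 * (m * q0)) (neumann_low t).
Proof.
move=> ht; apply: deg_lt_flatten => u /mapP [s]; rewrite mem_iota => /andP [_ hs] ->.
rewrite /Eser_low; case: ifP => _; first exact: deg_lt_mono (leq_addr _ _) ht.
by apply: deg_lt_mono (deg_lt_E_low s ht); rewrite leq_add2l leq_mul2r -ltnS hs orbT.
Qed.

Lemma deg_lt_psi_low_tail : deg_lt (m * q0).+1 psi_low_tail.
Proof.
apply/allP => y; rewrite mem_filter => /andP [_ /flattenP [s /mapP [l /arity_iota hl ->]]].
case/mapP => c /sumn_tuples hc -> /=; rewrite ltnS (leq_trans hc) //.
by rewrite leq_mul2r; case/andP: hl => _ ->; rewrite orbT.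
Qed.

Lemma term_sum_eq0 d : (maxn q0 ((m * q0).+1 + s0 * (m * q0)) <= d)%N -> term_sum a d = 0.
Proof.
rewrite geq_max => /andP [hq hd].
have -> : term_sum a d = high d by rewrite /high ltnNge hq.
rewrite (rec_rhs_unique high_rec neumann_coef_rec d).
exact: pcoef_deg_lt (deg_lt_neumann_low deg_lt_psi_low_tail) hd.
Qed.

End Reduction.
End MultilinearOps.

Lemma term_sum_fuel_morph (k : fieldType) (m : nat)
    (A : lmodType k) (PsiA : nat -> seq A -> A)
    (B : lmodType k) (PsiB : nat -> seq B -> B) (f : A -> B) :
  multilinear_ops m PsiA -> multilinear_ops m PsiB -> {morph f : x y / x + y} ->
  (forall l, (2 <= l <= m)%N -> forall s, size s = l -> f (PsiA l s) = PsiB l (map f s)) ->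
  forall a n q, f (term_sum_fuel m PsiA a n q) = term_sum_fuel m PsiB (f a) n q.
Proof.
move=> linA linB fD f_hom a.
have f0 : f 0 = 0 by apply: (addrI (f 0)); rewrite -fD !addr0.
elim=> [|n IH] q; first by rewrite /term_sum_fuel !big_nil f0.
rewrite !term_sum_fuelS // fD; congr (_ + _); first by case: ifP.
rewrite (big_morph f fD f0); apply: eq_big_seq => l /arity_iota hl.
rewrite (big_morph f fD f0); apply: eq_big_seq => c /compositionsP [hc _ _].
by rewrite f_hom ?size_map // -map_comp; congr (PsiB l _); apply: eq_map => j /=.
Qed.

Theorem mainTheorem4 (k : fieldType) (m : nat)
  (A : lmodType k) (PsiA : nat -> seq A -> A)
  (B : lmodType k) (PsiB : nat -> seq B -> B)
  (I : pred A) (pi : A -> B) :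
  [pchar k] =i pred0 ->
  is_algebra m PsiA -> is_algebra m PsiB ->
  Engel_type m PsiA ->
  sandwich_ideal m PsiA I ->
  quotient_map m PsiA PsiB I pi ->
  Yagzhev m PsiB ->
  Yagzhev m PsiA.
Proof.
move=> char0 [linA symA] [linB _] [s0 E_vanish] I_sandwich [pi_lin pi_hom _ pi_ker] [qB yagB].
have piD : {morph pi : x y / x + y} by move=> x y; have := pi_lin 1 x y; rewrite !scale1r.
pose q0 := maxn qB 2.
exists (maxn q0 ((m * q0).+1 + s0 * (m * q0))) => q hq a.
apply: (term_sum_eq0 linA symA I_sandwich char0 (leq_maxr qB 2) _ E_vanish hq) => n hn.
apply/pi_ker; rewrite /term_sum (term_sum_fuel_morph linA linB piD pi_hom).
exact/yagB/(leq_trans (leq_maxl qB 2) hn).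
Qed.
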